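(* For each infinite matrix $A=(A(i,j))_{i,j\in\mathbb{N}}$ with entries in $\{0,1\}$ and without identically zero rows, there exists an $A_\infty$-branching system on the measure space $([0,\infty),\mu)$, where $\mu$ is Lebesgue measure.
   Context: Notation: for measurable $Y,Z\subseteq X$, write $Y\stackrel{\mu\text{-a.e.}}{=}Z$ if $\mu(Y\setminus Z)=0=\mu(Z\setminus Y)$. For a measurable map $h$ on a measurable set $W$, $\mu\circ h$ is the measure $E\mapsto\mu(h(E))$ on $W$. For finite $U,V\subseteq\mathbb{N}$ and $j\in\mathbb{N}$ put $A(U,V,j)=\prod_{u\in U}A(u,j)\prod_{v\in V}(1-A(v,j))$. A transformation $F$ is nonsingular if $\mu(F^{-1}(E))=0$ whenever $\mu(E)=0$. An $A_\infty$-branching system on a $\sigma$-finite measure space $(X,\mu)$ is a family $(\{f_i\}_{i=1}^\infty,\{D_i\}_{i=1}^\infty)$ together with a nonsingular transformation $F:X\to X$ such that: (1) $f_i:D_i\to R_i$ is measurable, $D_i,R_i$ are measurable subsets of $X$, and $f_i(D_i)\stackrel{\mu\text{-a.e.}}{=}R_i$ for each $i$; (2) $F\circ f_i=\mathrm{id}_{D_i}$ $\mu$-a.e. on $D_i$ for each $i$; (3) $\mu(R_i\cap R_j)=0$ for $i\neq j$; (4) $\mu(R_j\cap D_i)=0$ if $A(i,j)=0$ and $\mu(R_j\setminus D_i)=0$ if $A(i,j)=1$; (5) for each pair $U,V$ of finite subsets of $\mathbb{N}$ such that $A(U,V,j)=1$ for only finitely many $j$, $\bigcap_{u\in U}D_u\cap\bigcap_{v\in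 V}(X\setminus D_v)\stackrel{\mu\text{-a.e.}}{=}\bigcup_{j:A(U,V,j)=1}R_j$; (6) there exist the Radon-Nikodym derivatives $\Phi_{f_i}$ of $\mu\circ f_i$ with respect to $\mu$ on $D_i$ and $\Phi_{f_i^{-1}}$ of $\mu\circ f_i^{-1}$ with respect to $\mu$ on $R_i$, where $f_i^{-1}:=F|_{R_i}$. *)

From HB Require Import structures.
From mathcomp Require Import all_boot all_order all_algebra.
From mathcomp Require Import all_classical all_reals all_analysis.
From mathcomp Require Import measurable_realfun lebesgue_integral.
Set Implicit Arguments. Unset Strict Implicit. Unset Printing Implicit Defensive.
Import Order.TTheory GRing.Theory Num.Theory.
Local Open Scope classical_set_scope.
Local Open Scope ring_scope.

Section BranchingDefs.
Variable R : realType.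

Notation leb := (@lebesgue_measure R).
Local Notation T := R.

Definition Xpos : set T := `[0%R, +oo[%classic.

Definition ae_seteq (Y Z : set T) : Prop :=
  leb.-negligible (Y `\` Z) /\ leb.-negligible (Z `\` Y).

(* A(U,V,j) = prod_{u in U} A(u,j) prod_{v in V} (1 - A(v,j)), as a boolean *)
Definition AUV (A : nat -> nat -> bool) (U V : seq nat) (j : nat) : bool :=
  all (fun u => A u j) U && all (fun v => ~~ A v j) V.

Definition has_RN_deriv (h : T -> T) (W : set T) : Prop :=
  exists Phi : T -> \bar R,
    measurable_fun W Phi /\ (forall x, W x -> (0 <= Phi x)%E) /\
    forall E : set T, measurable E -> E `<=` W ->
      measurable (h @` E) /\
      leb (h @` E) = (\int[leb]_(x in E) Phi x)%E.

Definition nonsingular_on_X (F : T -> T) : Prop :=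
  measurable_fun Xpos F /\ (forall x, Xpos x -> Xpos (F x)) /\
  forall E : set T, measurable E -> E `<=` Xpos ->
    leb E = 0%E -> leb (Xpos `&` F @^-1` E) = 0%E.

Definition A_branching_system (A : nat -> nat -> bool)
    (f : nat -> T -> T) (D Rg : nat -> set T) (F : T -> T) : Prop :=
  nonsingular_on_X F /\
  (forall i, measurable (D i) /\ D i `<=` Xpos /\
             measurable (Rg i) /\ Rg i `<=` Xpos /\
             measurable_fun (D i) (f i) /\
             (forall x, D i x -> Rg i (f i x)) /\
             ae_seteq (f i @` D i) (Rg i)) /\
  (forall i, leb.-negligible [set x | D i x /\ F (f i x) <> x]) /\
  (forall i j, i <> j -> leb (Rg i `&` Rg j) = 0%E) /\
  (forall i j, ~~ A i j -> leb (Rg j `&` D i) = 0%E) /\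
  (forall i j, A i j -> leb (Rg j `\` D i) = 0%E) /\
  (forall U V : seq nat, finite_set [set j | AUV A U V j] ->
     ae_seteq
       (Xpos `&` [set x | forall u, u \in U -> D u x]
             `&` [set x | forall v, v \in V -> ~ D v x])
       (\bigcup_(j in [set j | AUV A U V j]) Rg j)) /\
  (forall i, has_RN_deriv (f i) (D i) /\ has_RN_deriv F (Rg i)).

End BranchingDefs.

From HB Require Import structures.
From mathcomp Require Import all_boot all_order all_algebra.
From mathcomp Require Import all_classical all_reals all_analysis.
From mathcomp Require Import measurable_realfun lebesgue_integral.
From mathcomp Require Import lra zify.
Set Implicit Arguments. Unset Strict Implicit. Unset Printing Implicit Defensive.
Import Order.TTheory GRing.Theory Num.Theory.

(* Cut [0, +oo) into the unit blocks [m, m+1[ and label block m by the 2-adic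
   valuation j of m+1, so that each label occurs on infinitely many blocks.
   Take R_j to be the union of the blocks labelled j, and D_i the union of the
   blocks whose label j has A(i,j) = 1; as row i of A is nonzero, D_i also
   consists of infinitely many blocks.  Then f_i translates the k-th block of
   D_i onto the k-th block of R_i, and F translates each block of R_i back.
   Translations preserve Lebesgue measure, so both Radon-Nikodym derivatives
   are 1, and conditions (3)-(5) hold exactly since they reduce to statements
   about labels. *)

Definition count_lt (P : pred nat) (n : nat) : nat := count P (iota 0 n).

Lemma count_ltS (P : pred nat) n : count_lt P n.+1 = count_lt P n + P n.
Proof. by rewrite /count_lt -addn1 iotaD count_cat /= addn0. Qed.

Lemma leq_count_lt (P : pred nat) : {homo count_lt P : m n / m <= n}.
Proof.
move=> m n /subnK <-; elim: (n - m) => [|k IH] //.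
by rewrite addSn count_ltS; lia.
Qed.

Lemma count_lt_inj (P : pred nat) m n :
  P m -> P n -> count_lt P m = count_lt P n -> m = n.
Proof.
move=> Pm Pn; case: (ltngtP m n) => // lt_mn.
- by have := leq_count_lt P lt_mn; rewrite count_ltS Pm; lia.
- by have := leq_count_lt P lt_mn; rewrite count_ltS Pn; lia.
Qed.

(* The [k]-th element (counting from [0]) of [P] in increasing order; junk
   value [0] when [P] has at most [k] elements. *)
Definition nth_pred (P : pred nat) (k : nat) : nat :=
  xget 0 [set m | P m /\ count_lt P m = k].

Lemma nth_pred_count_lt (P : pred nat) m : P m -> nth_pred P (count_lt P m) = m.
Proof.
move=> Pm; apply: xget_unique => [//|n [Pn eq_n]].
exact: count_lt_inj Pn Pm eq_n.
Qed.

Section UnboundedPred.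
Variable P : pred nat.
Hypothesis P_unbounded : forall n, exists2 m, n <= m & P m.

Lemma count_lt_surj k : exists m, P m /\ count_lt P m = k.
Proof.
have [n lt_kn] : exists n, k < count_lt P n.
  elim: k.+1 => [|i [n le_in]]; first by exists 0.
  have [m le_nm Pm] := P_unbounded n; exists m.+1; rewrite count_ltS Pm.
  by have := leq_count_lt P le_nm; lia.
elim: n k lt_kn => [|n IH] k //; rewrite count_ltS.
case Pn: (P n) => /= lt_kn; last by apply: IH; lia.
have [lt_kn'|gt_kn|->] := ltngtP k (count_lt P n); [exact: IH | lia | by exists n].
Qed.

Lemma nth_predP k : P (nth_pred P k) /\ count_lt P (nth_pred P k) = k.
Proof. exact: (xgetPex 0 (count_lt_surj k)). Qed.

End UnboundedPred.

Definition transfer (P Q : pred nat) (m : nat) : nat := nth_pred Q (count_lt P m).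

Section Transfer.
Variables P Q : pred nat.
Hypothesis Q_unbounded : forall n, exists2 m, n <= m & Q m.

Lemma transfer_in m : Q (transfer P Q m).
Proof. exact: (nth_predP Q_unbounded _).1. Qed.

Lemma transferK m : P m -> transfer Q P (transfer P Q m) = m.
Proof.
by move=> Pm; rewrite /transfer (nth_predP Q_unbounded _).2 nth_pred_count_lt.
Qed.

End Transfer.

Definition dyadic_label (m : nat) : nat := logn 2 m.+1.

Lemma dyadic_label_unbounded j n : exists2 m, n <= m & dyadic_label m = j.
Proof.
have pos : 0 < 2 ^ j * n.*2.+1 by rewrite muln_gt0 expn_gt0.
exists (2 ^ j * n.*2.+1).-1; rewrite /dyadic_label ?prednK //.
  have : 1 <= 2 ^ j by rewrite expn_gt0.
  by rewrite -addnn; nia.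
rewrite lognM ?expn_gt0 // pfactorK // logn_coprime ?addn0 //.
by rewrite coprime_sym coprimen2 /= odd_double.
Qed.

Section DyadicLabels.
Variable A : nat -> nat -> bool.
Hypothesis A_row : forall i, exists j, A i j.

Definition ran_pred (j : nat) : pred nat := fun m => dyadic_label m == j.

Definition dom_pred (i : nat) : pred nat := fun m => A i (dyadic_label m).

Definition branch_index (i : nat) : nat -> nat := transfer (dom_pred i) (ran_pred i).

Definition return_index (n : nat) : nat :=
  transfer (ran_pred (dyadic_label n)) (dom_pred (dyadic_label n)) n.

Lemma ran_pred_unbounded j n : exists2 m, n <= m & ran_pred j m.
Proof.
by have [m le_nm <-] := dyadic_label_unbounded j n; exists m; rewrite // /ran_pred.
Qed.

Lemma dom_pred_unbounded i n : exists2 m, n <= m & dom_pred i m.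
Proof.
have [j Aij] := A_row i; have [m le_nm label_m] := dyadic_label_unbounded j n.
by exists m; rewrite // /dom_pred label_m.
Qed.

Lemma branch_index_ran i m : ran_pred i (branch_index i m).
Proof. exact: transfer_in _ (ran_pred_unbounded i) m. Qed.

Lemma return_index_dom i n : ran_pred i n -> dom_pred i (return_index n).
Proof.
by rewrite /return_index => /eqP ->; exact: transfer_in _ (dom_pred_unbounded i) n.
Qed.

Lemma branch_indexK i m : dom_pred i m -> return_index (branch_index i m) = m.
Proof.
move=> dom_m; have /eqP label_im := branch_index_ran i m.
by rewrite /return_index label_im; exact: (transferK (ran_pred_unbounded i) dom_m).
Qed.

Lemma return_indexK i n : ran_pred i n -> branch_index i (return_index n) = n.
Proof.
move=> ran_n; rewrite /return_index (eqP ran_n).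
exact: (transferK (dom_pred_unbounded i) ran_n).
Qed.

End DyadicLabels.

Local Open Scope classical_set_scope.
Local Open Scope ring_scope.

Section BlockShift.
Context {R : realType}.
Local Notation leb := (@lebesgue_measure R).
Local Notation Xpos := (@Xpos R).

Lemma measurable_shift_preimage (c : R) (A : set R) : measurable A ->
  measurable ((fun x => x + c) @^-1` A).
Proof.
move=> mA; rewrite -[X in measurable X]setTI.
by apply: measurable_funD => //; exact: measurable_id.
Qed.

Lemma lebesgue_measure_shift (c : R) (A : set R) : measurable A ->
  leb ((fun x => x + c) @^-1` A) = leb A.
Proof.
move=> mA; apply/esym.
have := @lebesgue_measure_unique R
  (pushforward leb (fun x : measurableTypeR R => (x : R) + c : measurableTypeR R)).
apply=> [|? _ [[a b] _ <-]|]//; first by apply: measurable_funD => //; exact: measurable_id.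
change (leb `]a, b] = leb ((fun x : R => x + c) @^-1` `]a, b])).
have -> : (fun x : R => x + c) @^-1` `]a, b] = `]a - c, b - c]%classic.
  by apply/seteqP; split => x /=; rewrite !in_itv /= ?lerBrDr ?ltrBlDr.
rewrite !lebesgue_measure_itv /= !lte_fin ltrD2r; case: ifPn => // _.
by rewrite -!EFinD opprB addrA subrK addrC.
Qed.

Lemma ae_seteqxx (Y : set R) : ae_seteq Y Y.
Proof. by rewrite /ae_seteq setDv; split; exact: negligible_set0. Qed.

Definition block (m : nat) : set R := `[m%:R, m.+1%:R[%classic.

Definition blocks (P : pred nat) : set R := [set x | 0 <= x /\ P (Num.truncn x)].

Definition block_shift (s : nat -> nat) (x : R) : R :=
  x + ((s (Num.truncn x))%:R - (Num.truncn x)%:R).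

Lemma blockP m x : block m x <-> 0 <= x /\ Num.truncn x = m.
Proof.
rewrite /block /= in_itv /=; split => [/andP[le_mx lt_xm]|[x_ge0 <-]].
  have x_ge0 : 0 <= x by exact: le_trans le_mx.
  by split => //; apply/eqP; rewrite truncn_eq // le_mx lt_xm.
exact: truncn_itv.
Qed.

Lemma Xpos_blocksT : Xpos = blocks xpredT.
Proof.
apply/seteqP; split => x; rewrite /Xpos /blocks /= in_itv /= andbT; first by split.
by case.
Qed.

Lemma blocks_Xpos P : blocks P `<=` Xpos.
Proof. by rewrite Xpos_blocksT => x []. Qed.

Lemma blocksE P : blocks P = \bigcup_(m in [set m | P m]) block m.
Proof.
apply/seteqP; split => [x [x_ge0 Px]|x [m Pm /blockP[x_ge0 eq_m]]].
  by exists (Num.truncn x) => //; apply/blockP.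
by split; rewrite //= eq_m.
Qed.

Lemma blocks_disjoint (P Q : pred nat) :
  (forall m, P m -> ~~ Q m) -> blocks P `&` blocks Q = set0.
Proof. by move=> PQ; apply/seteqP; split => // x [[_ /PQ/negP nQ] [_]]. Qed.

Lemma subset_blocks (P Q : pred nat) : (forall m, P m -> Q m) -> blocks P `<=` blocks Q.
Proof. by move=> PQ x [x_ge0 /PQ]. Qed.

Lemma measurable_blocks P : measurable (blocks P).
Proof. by rewrite blocksE; apply: bigcup_measurable => m _; exact: measurable_itv. Qed.

Lemma block_shiftE s m x : block m x -> block_shift s x = x + ((s m)%:R - m%:R).
Proof. by move=> /blockP[_ <-]. Qed.

Lemma block_translate m k x : block m x -> block k (x + (k%:R - m%:R)).
Proof.
by rewrite /block /= !in_itv /= -!natr1 => /andP[? ?]; apply/andP; split; lra.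
Qed.

Lemma block_shift_block s m x : block m x -> block (s m) (block_shift s x).
Proof. by move=> bx; rewrite (block_shiftE s bx); exact: block_translate. Qed.

Lemma block_shift_blocks s (P Q : pred nat) x :
  (forall m, P m -> Q (s m)) -> blocks P x -> blocks Q (block_shift s x).
Proof.
move=> sPQ [x_ge0 Px].
have /blockP[y_ge0 eq_y] := block_shift_block s (truncn_itv x_ge0).
by split; rewrite //= eq_y; exact: sPQ.
Qed.

Lemma block_shiftK s t (P : pred nat) x :
  (forall m, P m -> t (s m) = m) -> blocks P x -> block_shift t (block_shift s x) = x.
Proof.
move=> stK [x_ge0 Px]; have bx := truncn_itv x_ge0.
rewrite (block_shiftE t (block_shift_block s bx)) stK // (block_shiftE s bx).
lra.
Qed.

Lemma image_block_shift s (P Q : pred nat) :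
  (forall m, P m -> Q (s m)) -> (forall n, Q n -> exists2 m, P m & s m = n) ->
  block_shift s @` blocks P = blocks Q.
Proof.
move=> sPQ sQ; apply/seteqP; split => [_ [x Px <-]|y [y_ge0 Qy]].
  exact: block_shift_blocks sPQ Px.
have [m Pm eq_sm] := sQ _ Qy.
have by_ : block (s m) y by apply/blockP.
have bx := block_translate m by_; have /blockP[x_ge0 eq_x] := bx.
exists (y + (m%:R - (s m)%:R)); first by split; rewrite //= eq_x.
rewrite (block_shiftE s bx); lra.
Qed.

Lemma blocks_block_shift_preimage s P (Y : set R) :
  blocks P `&` block_shift s @^-1` Y =
  \bigcup_m (blocks P `&` block m `&` (fun x => x + ((s m)%:R - m%:R)) @^-1` Y).
Proof.
apply/seteqP; split => [x [Px Yx]|x [m _ [[Px bx] /= Yx]]].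
  have bx := truncn_itv Px.1.
  by exists (Num.truncn x) => //; split; rewrite /= -?(block_shiftE s bx).
by split; rewrite //= (block_shiftE s bx).
Qed.

Lemma measurable_block_shift s P : measurable_fun (blocks P) (block_shift s).
Proof.
move=> _ Y mY; rewrite blocks_block_shift_preimage.
apply: bigcup_measurable => m _; apply: measurableI; last exact: measurable_shift_preimage.
by apply: measurableI; [exact: measurable_blocks | exact: measurable_itv].
Qed.

Lemma nonsingular_block_shift s : nonsingular_on_X (block_shift s).
Proof.
rewrite /nonsingular_on_X Xpos_blocksT; split; first exact: measurable_block_shift.
split=> [x|E mE _ E0]; first exact: block_shift_blocks.
apply/negligibleP; first by apply: measurable_block_shift => //; exact: measurable_blocks.
rewrite blocks_block_shift_preimage; apply: (negligible_bigcup (mu := leb)) => m.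
have null_shift : leb.-negligible ((fun x => x + ((s m)%:R - m%:R)) @^-1` E).
  apply/negligibleP; first exact: measurable_shift_preimage.
  exact: etrans (lebesgue_measure_shift _ mE) E0.
by apply: negligibleS null_shift => x [].
Qed.

Lemma block_shift_image_measure s (P : pred nat) (E : set R) :
  {in P &, injective s} -> measurable E -> E `<=` blocks P ->
  measurable (block_shift s @` E) /\ leb (block_shift s @` E) = leb E.
Proof.
move=> s_inj mE sEP; pose c m : R := (s m)%:R - m%:R.
pose piece m := E `&` block m.
have mpiece m : measurable (piece m) by apply: measurableI => //; exact: measurable_itv.
have E_bigcup : E = \bigcup_m piece m.
  apply/seteqP; split => [x Ex|x [m _ []] //].
  by exists (Num.truncn x) => //; split => //; exact/truncn_itv/(sEP _ Ex).1.
have image_bigcup : block_shift s @` E = \bigcup_m ((fun y => y - c m) @^-1` piece m).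
  apply/seteqP; split => [_ [x Ex <-]|y [m _ [Ex bx]]].
    have bx := truncn_itv (sEP _ Ex).1.
    by exists (Num.truncn x) => //=; rewrite (block_shiftE s bx) addrK.
  by exists (y - c m) => //; rewrite (block_shiftE s bx) subrK.
have disjoint_images : trivIset setT (fun m => (fun y => y - c m) @^-1` piece m).
  move=> m n _ _ [y [[Em bm] [En bn]]].
  have [[_ Pm] [_ Pn]] := (sEP _ Em, sEP _ En).
  move: (bm) (bn) Pm Pn => /blockP[_ ->] /blockP[_ ->] Pm Pn; apply: s_inj => //.
  have := block_translate (s m) bm; have := block_translate (s n) bn.
  by rewrite /c !subrK => /blockP[_ <-] /blockP[_ <-].
have disjoint_pieces : trivIset setT piece.
  by move=> m n _ _ [x [[_ /blockP[_ <-]] [_ /blockP[_ <-]]]].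
have mimage : measurable (block_shift s @` E).
  by rewrite image_bigcup; apply: bigcup_measurable => m _; exact: measurable_shift_preimage.
split => //; rewrite image_bigcup [in RHS]E_bigcup !measure_bigcup //.
- by apply: eq_eseriesr => m _; exact: lebesgue_measure_shift.
- by move=> m _; exact: mpiece.
- by move=> m _; exact: measurable_shift_preimage.
Qed.

Lemma has_RN_deriv_block_shift s (P : pred nat) :
  {in P &, injective s} -> has_RN_deriv (block_shift s) (blocks P).
Proof.
move=> s_inj; exists (fun=> 1%E); split; first exact: measurable_cst.
split=> [x _|E mE sEP]; first exact: lee01.
have [mimage ->] := block_shift_image_measure s_inj mE sEP.
by rewrite integral_cst // mul1e.
Qed.

End BlockShift.

Section BranchingSystem.
Variables (R : realType) (A : nat -> nat -> bool).
Hypothesis A_row : forall i, exists j, A i j.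
Local Notation leb := (@lebesgue_measure R).
Local Notation Xpos := (@Xpos R).
Local Notation D i := (@blocks R (dom_pred A i)).
Local Notation Rg j := (@blocks R (ran_pred j)).
Local Notation f i := (@block_shift R (branch_index A i)).
Local Notation F := (@block_shift R (return_index A)).

Lemma branch_index_inj i : {in dom_pred A i &, injective (branch_index A i)}.
Proof.
move=> m n dom_m dom_n eq_mn.
by rewrite -(branch_indexK dom_m) eq_mn branch_indexK.
Qed.

Lemma return_index_inj j : {in ran_pred j &, injective (return_index A)}.
Proof.
move=> m n ran_m ran_n eq_mn.
by rewrite -(return_indexK A_row ran_m) eq_mn return_indexK.
Qed.

Lemma branch_maps_onto i :
  measurable (D i) /\ D i `<=` Xpos /\ measurable (Rg i) /\ Rg i `<=` Xpos /\
  measurable_fun (D i) (f i) /\ (forall x, D i x -> Rg i (f i x)) /\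
  ae_seteq (f i @` D i) (Rg i).
Proof.
do ![split; first exact: measurable_blocks | split; first exact: blocks_Xpos].
split; first exact: measurable_block_shift.
split=> [x|]; first by apply: block_shift_blocks => m _; exact: branch_index_ran.
rewrite (image_block_shift (Q := ran_pred i)); first exact: ae_seteqxx.
  by move=> m _; exact: branch_index_ran.
move=> n ran_n; exists (return_index A n); first exact: return_index_dom.
exact: return_indexK.
Qed.

Lemma return_branchK i : leb.-negligible [set x | D i x /\ F (f i x) <> x].
Proof.
rewrite (_ : [set x | _] = set0); first exact: negligible_set0.
by apply/seteqP; split => // x [Dx []]; apply: block_shiftK Dx => m; exact: branch_indexK.
Qed.

Lemma ranges_disjoint i j : i <> j -> leb (Rg i `&` Rg j) = 0%E.
Proof.
move=> ij; rewrite blocks_disjoint ?measure0 // => m /eqP label_m.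
by rewrite /ran_pred label_m; exact/eqP.
Qed.

Lemma range_dom_disjoint i j : ~~ A i j -> leb (Rg j `&` D i) = 0%E.
Proof.
move=> nAij; rewrite blocks_disjoint ?measure0 // => m /eqP label_m.
by rewrite /dom_pred label_m.
Qed.

Lemma range_sub_dom i j : A i j -> leb (Rg j `\` D i) = 0%E.
Proof.
move=> Aij; rewrite (_ : _ `\` _ = set0) ?measure0 // setD_eq0.
by apply: subset_blocks => m /eqP label_m; rewrite /dom_pred label_m.
Qed.

Lemma cylinder_blocksE (U V : seq nat) :
  Xpos `&` [set x | forall u, u \in U -> D u x] `&` [set x | forall v, v \in V -> ~ D v x]
  = \bigcup_(j in [set j | AUV A U V j]) Rg j.
Proof.
rewrite Xpos_blocksT; apply/seteqP; split => [x [[[x_ge0 _] DU] nDV]|x].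
  exists (dyadic_label (Num.truncn x)); last by split; rewrite /ran_pred.
  apply/andP; split; apply/allP => u uU; first by have [] := DU u uU.
  by apply/negP => Au; apply: (nDV u uU).
move=> [j /andP[/allP AU /allP nAV] [x_ge0 /eqP label_x]].
split; [split=> // u uU | move=> v vV [_]].
  by split; rewrite //= /dom_pred label_x; exact: AU.
by rewrite /dom_pred label_x; apply/negP; exact: nAV.
Qed.

Lemma branch_RN_derivs i : has_RN_deriv (f i) (D i) /\ has_RN_deriv F (Rg i).
Proof.
split; apply: has_RN_deriv_block_shift; [exact: branch_index_inj | exact: return_index_inj].
Qed.

End BranchingSystem.

Theorem mainTheorem4 (R : realType) (A : nat -> nat -> bool) :
  (forall i : nat, exists j : nat, A i j) ->
  exists (f : nat -> R -> R) (D Rg : nat -> set (R)) (F : R -> R),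
    A_branching_system A f D Rg F.
Proof.
move=> A_row; exists (fun i => block_shift (branch_index A i)),
  (fun i => blocks (dom_pred A i)), (fun j => blocks (ran_pred j)),
  (block_shift (return_index A)).
split; first exact: nonsingular_block_shift.
split; first exact: branch_maps_onto.
split; first exact: return_branchK.
split; first exact: ranges_disjoint.
split; first exact: range_dom_disjoint.
split; first exact: range_sub_dom.
split; first by move=> U V _; rewrite cylinder_blocksE; exact: ae_seteqxx.
exact: branch_RN_derivs A_row.
Qed.
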